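(* Assume $\mathcal X\neq\emptyset$ and $\mathcal D\neq\emptyset$, and let $I$ be any interpretation. There is no formula $\psi$ such that, for every assignment $\sigma$, $\sigma,I\models_P\psi$ holds if and only if $\sigma$ obeys the meta-flow axiom.
   Context: Fix a set $\mathcal X$ of synchronisation variables and, for each $x\in\mathcal X$, a distinct data flow variable $\hat x$; put $\hat{\mathcal X}=\{\hat x : x\in\mathcal X\}$. Fix a set $\mathcal F$ of function symbols with arities and a set $\mathcal P$ of predicate symbols with arities, containing a binary equality symbol $=$. Let $\mathcal D$ be the set of ground terms over $\mathcal F$. Formulas and terms: $\psi ::= \top \mid x \mid \psi_1\wedge\psi_2 \mid \neg\psi \mid p(t_1,\dots,t_n)$, $t ::= \hat x \mid f(t_1,\dots,t_n)$. An assignment $\sigma$ is a partial map sending each $x\in\mathcal X$ in its domain to $\{\mathrm{true},\mathrm{false}\}$ and each $\hat x$ in its domain to $\mathcal D$. An interpretation $I$ is a partial map from pairs $(p,(d_1,\dots,d_n))$ ($p$ of arity $n$, $d_i\in\mathcal D$) to $\{\mathrm{true},\mathrm{false}\}$. $\mathrm{Val}_\sigma(\hat x)=\sigma(\hat x)$, $\mathrm{Val}_\sigma(f(t_1,\dots,t_n))=f(\mathrm{Val}_\sigma(t_1),\dots)$, undefined if an argument is undefined. Partial satisfaction $\models_P$ / dissatisfaction $\mathrel{=\!\!|}_P$: $\sigma,I\models_P\top$ always; $\models_P x$ iff $\sigma(x)=\mathrm{true}$; $\models_P\psi_1\wedge\psi_2$ iff both; $\models_P\neg\psi$ iff $\mathrel{=\!\!|}_P\psi$;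 $\models_P p(\vec t)$ iff all $\mathrm{Val}_\sigma(t_i)$ defined and $I(p,(\mathrm{Val}_\sigma(t_i))_i)=\mathrm{true}$; $\mathrel{=\!\!|}_P\top$ never; $\mathrel{=\!\!|}_P x$ iff $\sigma(x)=\mathrm{false}$; $\mathrel{=\!\!|}_P\psi_1\wedge\psi_2$ iff $\mathrel{=\!\!|}_P\psi_1$ or $\mathrel{=\!\!|}_P\psi_2$; $\mathrel{=\!\!|}_P\neg\psi$ iff $\models_P\psi$; $\mathrel{=\!\!|}_P p(\vec t)$ iff all values defined and $I(\dots)=\mathrm{false}$. An assignment $\sigma$ obeys the meta-flow axiom, written $MFA(\sigma)$, if for every $x\in\mathcal X$: whenever $\sigma(\hat x)$ is defined, $\sigma(x)=\mathrm{true}$. *)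

From Stdlib Require Import List.
Import ListNotations.

(* A signature: synchronisation variables X (the data flow variable hat x is
   represented by [TData x]), function symbols with arities, predicate symbols
   with arities containing a binary equality symbol. *)
Record signature := {
  SVar : Type;
  FSym : Type;
  fArity : FSym -> nat;
  PSym : Type;
  pArity : PSym -> nat;
  eqSym : PSym;
  eqSym_arity : pArity eqSym = 2
}.

Inductive gterm (F : Type) : Type :=
| GApp : F -> list (gterm F) -> gterm F.
Arguments GApp {F} _ _.

Inductive gwf {F : Type} (ar : F -> nat) : gterm F -> Prop :=
| gwf_app f ts : length ts = ar f -> (forall t, In t ts -> gwf ar t) ->
    gwf ar (GApp f ts).

Definition Dom (S : signature) := { d : gterm (FSym S) | gwf (fArity S) d }.

Inductive term (S : signature) : Type :=
| TData : SVar S -> term S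
| TApp : FSym S -> list (term S) -> term S.
Arguments TData {S} _.
Arguments TApp {S} _ _.

Inductive term_wf (S : signature) : term S -> Prop :=
| twf_var x : term_wf S (TData x)
| twf_app f ts : length ts = fArity S f -> (forall t, In t ts -> term_wf S t) ->
    term_wf S (TApp f ts).

Inductive formula (S : signature) : Type :=
| FTop : formula S
| FSync : SVar S -> formula S
| FAnd : formula S -> formula S -> formula S
| FNeg : formula S -> formula S
| FPred : PSym S -> list (term S) -> formula S.
Arguments FTop {S}.
Arguments FSync {S} _.
Arguments FAnd {S} _ _.
Arguments FNeg {S} _.
Arguments FPred {S} _ _.

Fixpoint formula_wf {S : signature} (psi : formula S) : Prop :=
  match psi with
  | FTop => True
  | FSync _ => True
  | FAnd a b => formula_wf a /\ formula_wf b
  | FNeg a => formula_wf a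
  | FPred p ts => length ts = pArity S p /\ (forall t, In t ts -> term_wf S t)
  end.

Record assignment (S : signature) := {
  sync : SVar S -> option bool;
  data : SVar S -> option (Dom S)
}.
Arguments sync {S} _ _.
Arguments data {S} _ _.

(* It is given
   as a function on all argument lists; only well-formed arity-correct tuples
   of elements of D are ever consulted by well-formed formulas. *)
Definition interpretation (S : signature) :=
  PSym S -> list (gterm (FSym S)) -> option bool.

Fixpoint all_some {A : Type} (l : list (option A)) : option (list A) :=
  match l with
  | [] => Some []
  | Some a :: l' => match all_some l' with Some r => Some (a :: r) | None => None end
  | None :: _ => None
  end.

Fixpoint Val {S : signature} (s : assignment S) (t : term S) : option (gterm (FSym S)) :=
  match t with
  | TData x => option_map (@proj1_sig _ _) (data s x)
  | TApp f ts => option_map (GApp f) (all_some (map (Val s) ts))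
  end.

Definition Vals {S : signature} (s : assignment S) (ts : list (term S)) :=
  all_some (map (Val s) ts).

Fixpoint psat {S : signature} (I : interpretation S) (s : assignment S)
  (psi : formula S) : Prop :=
  match psi with
  | FTop => True
  | FSync x => sync s x = Some true
  | FAnd a b => psat I s a /\ psat I s b
  | FNeg a => pdsat I s a
  | FPred p ts => exists ds, Vals s ts = Some ds /\ I p ds = Some true
  end
with pdsat {S : signature} (I : interpretation S) (s : assignment S)
  (psi : formula S) : Prop :=
  match psi with
  | FTop => False
  | FSync x => sync s x = Some false
  | FAnd a b => pdsat I s a \/ pdsat I s b
  | FNeg a => psat I s a
  | FPred p ts => exists ds, Vals s ts = Some ds /\ I p ds = Some false
  end.

Definition MFA {S : signature} (s : assignment S) : Prop :=
  forall x : SVar S, data s x <> None -> sync s x = Some true.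

(* Partial satisfaction is monotone: defining more variables can only turn
   undetermined formulas into satisfied or dissatisfied ones, never revoke a
   verdict.  The meta-flow axiom is not monotone: the empty assignment obeys
   it, while giving every data flow variable a value but leaving every
   synchronisation variable undefined violates it.  A formula capturing the
   axiom would be satisfied by the first assignment, hence by the second. *)
From Stdlib Require Import List.
Import ListNotations.

Definition extends {S : signature} (s s' : assignment S) : Prop :=
  (forall x b, sync s x = Some b -> sync s' x = Some b) /\
  (forall x d, data s x = Some d -> data s' x = Some d).

Lemma term_ind_nested (S : signature) (P : term S -> Prop)
  (HData : forall x, P (TData x))
  (HApp : forall f ts, Forall P ts -> P (TApp f ts)) :
  forall t, P t.
Proof.
  fix IH 1. intros [x | f ts].
  - apply HData.
  - apply HApp. induction ts as [| t ts IHts]; constructor; auto.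
Qed.

Lemma all_some_map_mono {A B : Type} (f g : A -> option B) (l : list A) :
  Forall (fun a => forall b, f a = Some b -> g a = Some b) l ->
  forall r, all_some (map f l) = Some r -> all_some (map g l) = Some r.
Proof.
  induction 1 as [| a l Ha _ IH]; simpl; intros r; [easy |].
  destruct (f a) as [b |] eqn:Efa; [rewrite (Ha b eq_refl) | discriminate].
  destruct (all_some (map f l)) as [r' |]; [rewrite (IH r' eq_refl) | discriminate].
  easy.
Qed.

Section Monotonicity.

Variables (S : signature) (s s' : assignment S).
Hypothesis ext : extends s s'.

Lemma Val_extends (t : term S) (v : gterm (FSym S)) :
  Val s t = Some v -> Val s' t = Some v.
Proof.
  revert v. induction t as [x | f ts IHts] using term_ind_nested; simpl; intros v.
  - destruct (data s x) as [d |] eqn:Ed; [| discriminate].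
    now rewrite (proj2 ext x d Ed).
  - destruct (all_some (map (Val s) ts)) as [r |] eqn:Er; [| discriminate].
    now rewrite (all_some_map_mono _ _ ts IHts r Er).
Qed.

Lemma Vals_extends (ts : list (term S)) (ds : list (gterm (FSym S))) :
  Vals s ts = Some ds -> Vals s' ts = Some ds.
Proof.
  apply all_some_map_mono, Forall_forall. intros t _. apply Val_extends.
Qed.

Lemma psat_pdsat_extends (I : interpretation S) (psi : formula S) :
  (psat I s psi -> psat I s' psi) /\ (pdsat I s psi -> pdsat I s' psi).
Proof.
  induction psi as [| x | a [IHa IHa'] b [IHb IHb'] | a [IHa IHa'] | p ts]; simpl.
  - tauto.
  - split; apply (proj1 ext).
  - tauto.
  - tauto.
  - split; intros [ds [Hds Hp]]; exists ds; auto using Vals_extends.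
Qed.

End Monotonicity.

Definition empty_assignment (S : signature) : assignment S :=
  {| sync := fun _ => None; data := fun _ => None |}.

Definition constant_data_assignment {S : signature} (d : Dom S) : assignment S :=
  {| sync := fun _ => None; data := fun _ => Some d |}.

Lemma extends_empty_constant_data (S : signature) (d : Dom S) :
  extends (empty_assignment S) (constant_data_assignment d).
Proof. split; discriminate. Qed.

Lemma MFA_empty (S : signature) : MFA (empty_assignment S).
Proof. intros x Hx. now contradiction Hx. Qed.

Lemma not_MFA_constant_data (S : signature) (x : SVar S) (d : Dom S) :
  ~ MFA (constant_data_assignment d).
Proof. intros H. specialize (H x ltac:(discriminate)). discriminate. Qed.

Theorem mainTheorem3 (S : signature)
  (hX : inhabited (SVar S))
  (hD : inhabited (Dom S))
  (I : interpretation S) :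
  ~ (exists psi : formula S,
       formula_wf psi /\
       forall s : assignment S, psat I s psi <-> MFA s).
Proof.
  intros [psi [_ Hpsi]]. destruct hX as [x], hD as [d].
  apply (not_MFA_constant_data S x d), Hpsi.
  apply (psat_pdsat_extends _ _ _ (extends_empty_constant_data S d)).
  apply Hpsi, MFA_empty.
Qed.
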